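(* Consider REFORM with the RPTSC reward scheme with at most $k=2$ pairings and no decay ($\beta\equiv1$), with scale $\alpha>0$, $n$ tasks and beliefs as in the context. For a trustworthy agent $a_i$, REFORM with RPTSC is $\gamma$-fair with $$\frac{1}{\gamma}=\alpha\sum_{x_i\in\mathcal{X}}(1-r\,q'_{x_i})(1-q'_{x_i})\left(1-(1-q_{x_i})^{n-1}\right).$$
   Context: REFORM with RPTSC reward: agent $a_i$ on task $\tau$ reports $y_i$ in finite answer space $\mathcal{X}$; $n-1$ reports are sampled, one from each other task, and $f(y_i)$ is the fraction equal to $y_i$. A random peer on $\tau$ with report $y_p$ and reputation (TERM) score $\Omega_p$ is chosen: if $y_i=y_p$ the reward is $\alpha(1/f(y_i)-1)$; otherwise, if $\Omega_i\le\Omega_p$ or two pairings have been used, the reward is $-\alpha$ (or $0$ if $f(y_i)=0$); otherwise a second peer is drawn. Beliefs: $q_x\in(0,1)$ is the probability that a peer reports $x$ (also the probability with which $a_i$'s evaluation is $x$); $q'_x\in(0,1)$ is the probability that a peer on the same task reports $x$ given $a_i$'s evaluation is $x$; $r\in[0,1]$ is the probability that a random peer's TERM score is below $\Omega_i$, the same for every peer. For a trustworthy agent with evaluation (and report) $x$, its expected reward is $E^*(x)=\alpha\left[\frac{q'_x}{q_x}-1+r(1-q'_x)\frac{q'_x}{q_x}\right]\left[1-(1-q_x)^{n-1}\right]$ and its optimal reward (when its report matches the peer's) is $M^*(x)=\alpha\left(\frac{1}{q_x}-1\right)\left(1-(1-q_x)^{n-1}\right)$. $\gamma$-fairness: a peer-based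 mechanism is $\gamma$-fair if, for a trustworthy agent, $\mathbb{E}_{x\in\mathcal{X}}[M^*-E^*]=\frac{1}{\gamma}$, the expectation taken over the agent's evaluation $x$ distributed according to $q_x$. *)

From mathcomp Require Import all_boot all_order all_algebra.
Set Implicit Arguments. Unset Strict Implicit. Unset Printing Implicit Defensive.
Import Order.TTheory GRing.Theory Num.Theory.
Local Open Scope ring_scope.

Section REFORM.
Variables (R : realFieldType) (X : finType).

(* Expected reward of a trustworthy agent with evaluation (and report) x,
   RPTSC with k = 2 pairings, no decay:
   E*(x) = alpha [ q'_x/q_x - 1 + r (1 - q'_x) q'_x/q_x ] [1 - (1-q_x)^(n-1)] *)
Definition Estar (alpha r : R) (n : nat) (q q' : X -> R) (x : X) : R :=
  alpha * (q' x / q x - 1 + r * (1 - q' x) * (q' x / q x))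
        * (1 - (1 - q x) ^+ (n - 1)).

Definition Mstar (alpha : R) (n : nat) (q : X -> R) (x : X) : R :=
  alpha * (1 / q x - 1) * (1 - (1 - q x) ^+ (n - 1)).

Definition fairness_gap (alpha r : R) (n : nat) (q q' : X -> R) : R :=
  \sum_(x : X) q x * (Mstar alpha n q x - Estar alpha r n q q' x).

(* gamma-fairness, stated through the value inv_gamma = 1/gamma:
   the mechanism is gamma-fair iff E_x[M* - E*] = 1/gamma. *)
Definition gamma_fair_inv (alpha r : R) (n : nat) (q q' : X -> R)
  (inv_gamma : R) : Prop :=
  fairness_gap alpha r n q q' = inv_gamma.

End REFORM.

From mathcomp Require Import all_boot all_order all_algebra.
From mathcomp Require Import ring.
Import Order.TTheory GRing.Theory Num.Theory.
Local Open Scope ring_scope.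

(* Weighting by q_x cancels the 1/q_x in both rewards, leaving the common
   factor alpha (1 - (1 - q_x)^(n-1)) times (1 - q'_x) - r q'_x (1 - q'_x). *)
Lemma weighted_gap_eq (R : realFieldType) (X : finType) (alpha r : R) (n : nat)
    (q q' : X -> R) (x : X) :
  q x != 0 ->
  q x * (Mstar alpha n q x - Estar alpha r n q q' x) =
  alpha * ((1 - r * q' x) * (1 - q' x) * (1 - (1 - q x) ^+ (n - 1))).
Proof. by move=> qx_neq0; rewrite /Mstar /Estar; field. Qed.

Theorem proposition4 (R : realFieldType) (X : finType) (alpha r : R) (n : nat)
  (q q' : X -> R)
  (halpha : 0 < alpha)
  (hn : (1 <= n)%N)
  (hq : forall x, 0 < q x < 1)
  (hq' : forall x, 0 < q' x < 1)
  (hqsum : \sum_(x : X) q x = 1)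
  (hr : 0 <= r <= 1) :
  gamma_fair_inv alpha r n q q'
    (alpha * \sum_(x : X) (1 - r * q' x) * (1 - q' x) * (1 - (1 - q x) ^+ (n - 1))).
Proof.
rewrite /gamma_fair_inv /fairness_gap mulr_sumr; apply: eq_bigr => x _.
by apply: weighted_gap_eq; case/andP: (hq x) => qx_gt0 _; rewrite gt_eqF.
Qed.
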